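(* Let $\mathcal C$ be the UM simplex $(n,k)$ code and $s\ge0$. Then the binary block code generated by $G_{\rm total}$ (whose nodes are the coordinates of $c_{\rm total}=(c_0,\dots,c_{s+1})=u_{\rm total}G_{\rm total}$) has the Easy Repair Property.
   Context: Let $k\ge2$ and let $G\in\mathbb F_2^{k\times(2^k-1)}$ be a generator matrix of the binary simplex code (columns are all distinct nonzero vectors of $\mathbb F_2^k$); set $n=2(2^k-1)$. The UM simplex $(n,k)$ code is the binary convolutional code with encoder $G(D)=G_0+G_1D$, $G_0=[G\ G]$, $G_1=[G\ 0]\in\mathbb F_2^{k\times n}$. For $u_{\rm total}=(u_0,\dots,u_s)\in\mathbb F_2^{(s+1)k}$, $c_{\rm total}=u_{\rm total}G_{\rm total}$, where $G_{\rm total}\in\mathbb F_2^{(s+1)k\times(s+2)n}$ is the block matrix whose $i$-th block row ($i=0,\dots,s$) has $G_0$ in block column $i$, $G_1$ in block column $i+1$ and zeros elsewhere. Nodes are the coordinates of $c_{\rm total}$, corresponding to the columns $g_1,\dots,g_N$ of $G_{\rm total}$. An erasure pattern is a set $S^e$ of erased nodes; the others are live. It is correctable if no two distinct codewords coincide on all live positions. A node $c_i$ is related to distinct nodes $c_{j_1},\dots,c_{j_\gamma}$ (all different from $c_i$) if $g_i=g_{j_1}+\dots+g_{j_\gamma}$. An erased node allows for easy repair if it is related to $\gamma\le2$ live nodes. An erasure pattern allows for easy repair if all erased nodes can be recovered by a sequence of easy repairs, where after each step the recovered node is regarded as live. A code has the Easy Repair Property if every correctable erasure pattern allows for easy repair.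 *)

From mathcomp Require Import all_boot all_algebra.
Set Implicit Arguments. Unset Strict Implicit. Unset Printing Implicit Defensive.
Import GRing.Theory.
Local Open Scope ring_scope.

(* A binary block code is given by a generator matrix whose rows are indexed
   by a finite type [I] (message coordinates) and whose columns are indexed by
   a finite type [N] (the nodes = codeword coordinates). *)
Section BlockCode.
Variables (I N : finType) (M : I -> N -> 'F_2).

Definition gcol (i : N) : {ffun I -> 'F_2} := [ffun r => M r i].

Definition encode (u : {ffun I -> 'F_2}) (i : N) : 'F_2 := \sum_r u r * M r i.

Definition correctable (S : {set N}) : Prop :=
  forall u v : {ffun I -> 'F_2},
    (forall i, i \notin S -> encode u i = encode v i) ->
    forall i, encode u i = encode v i.

Definition related (i : N) (J : {set N}) : Prop :=
  i \notin J /\ gcol i = \sum_(j in J) gcol j.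

Definition easy_repair (L : {set N}) (i : N) : Prop :=
  exists J : {set N}, [/\ (0 < #|J| <= 2)%N, J \subset L & related i J].

Definition allows_easy_repair (S : {set N}) : Prop :=
  exists p : seq N, perm_eq p (enum S) /\
    forall (p1 : seq N) (x : N) (p2 : seq N), p = p1 ++ x :: p2 ->
      easy_repair (~: S :|: [set y in p1]) x.

Definition easy_repair_property : Prop :=
  forall S : {set N}, correctable S -> allows_easy_repair S.
End BlockCode.

(* G : k x m with m = 2^k - 1; n = m + m = 2(2^k - 1). *)
Section UMSimplex.
Variables (k s : nat).
Notation m := (2 ^ k - 1)%N.

Definition G0 (G : 'M['F_2]_(k, m)) : 'M['F_2]_(k, m + m) := row_mx G G.
Definition G1 (G : 'M['F_2]_(k, m)) : 'M['F_2]_(k, m + m) := row_mx G 0.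

(* rows of G_total indexed by (block row i in 0..s, row a in 0..k-1),
   columns (nodes) by (block column j in 0..s+1, column b in 0..n-1) *)
Definition Gtotal (G : 'M['F_2]_(k, m))
  (r : 'I_s.+1 * 'I_k) (c : 'I_s.+2 * 'I_(m + m)) : 'F_2 :=
  if val c.1 == val r.1 then G0 G r.2 c.2
  else if val c.1 == (val r.1).+1 then G1 G r.2 c.2
  else 0.
End UMSimplex.

From mathcomp Require Import all_boot all_algebra zify ring.
From Stdlib Require Import Classical_Prop.
Set Implicit Arguments. Unset Strict Implicit. Unset Printing Implicit Defensive.
Import GRing.Theory.
Local Open Scope ring_scope.

(* Suppose a correctable erasure pattern is stuck: no erased node is related to
   one or two live nodes.  As the columns of [G] are all the nonzero vectors of
   F_2^k, every vector carrying some [h] in one block row, or the same [h] in two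
   consecutive block rows, is the column of a node.  So the live columns
   together with 0 are closed under each sum of that shape: otherwise the node
   with that column would be erased and easily repaired.  Correctability puts
   every erased column in the span of the live ones; splitting that sum into
   block-row components and pushing the two-row terms along the chain of block
   rows shows that the erased column is 0 or a live column, hence 0.  Then the
   two nodes of block column 0 sharing a nonzero column are live, and together
   they repair any erased node. *)

Lemma pchar_F2 : (2 \in [pchar 'F_2])%N.
Proof. exact: pchar_Fp. Qed.

Lemma F2_eq1 (x : 'F_2) : x != 0 -> x = 1.
Proof. by case: x => -[|[|//]] ? //= _; apply/val_inj. Qed.

Lemma ffun_addvv (T : finType) (v : {ffun T -> 'F_2}) : v + v = 0.
Proof. by apply/ffunP => i; rewrite !ffunE (addrr_pchar2 pchar_F2). Qed.

Lemma oppv_F2 (V : lmodType 'F_2) (v : V) : - v = v.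
Proof. by rewrite -scaleN1r (oppr_pchar2 pchar_F2) scale1r. Qed.

Section Duality.
Variable I : finType.

Definition dot (u v : {ffun I -> 'F_2}) : 'F_2 := \sum_r u r * v r.

Lemma dotDl u1 u2 v : dot (u1 + u2) v = dot u1 v + dot u2 v.
Proof. by rewrite /dot -big_split; apply: eq_bigr => r _; rewrite ffunE mulrDl. Qed.

Lemma dotDr u v1 v2 : dot u (v1 + v2) = dot u v1 + dot u v2.
Proof. by rewrite /dot -big_split; apply: eq_bigr => r _; rewrite ffunE mulrDr. Qed.

Lemma dot_unit_vector (v : {ffun I -> 'F_2}) r :
  dot [ffun r' => (r' == r)%:R] v = v r.
Proof.
rewrite /dot (bigD1 r) //= ffunE eqxx mul1r big1 ?addr0 // => r' /negbTE ne.
by rewrite ffunE ne mul0r.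
Qed.

Variables (N : finType) (g : N -> {ffun I -> 'F_2}).

(* Over F_2, linear combinations are subset sums. *)
Lemma span_or_separated (A : {set N}) (v : {ffun I -> 'F_2}) :
  (exists2 T : {set N}, T \subset A & v = \sum_(y in T) g y) \/
  (exists2 u, forall y, y \in A -> dot u (g y) = 0 & dot u v != 0).
Proof.
elim: {A}_.+1 {-2}A (ltnSn #|A|) v => // n IH A; rewrite ltnS => leAn v.
have [->|[y yA]] := set_0Vmem A.
  case: (pickP (fun r => v r != 0)) => [r vr|v0].
    by right; exists [ffun r' => (r' == r)%:R] => [y|]; rewrite ?inE ?dot_unit_vector.
  left; exists set0; rewrite ?sub0set // big_set0.
  by apply/ffunP => r; rewrite ffunE; apply/eqP/negbFE/v0.
have ltAy : (#|A :\ y| < n)%N by rewrite (cardsD1 y A) yA in leAn.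
have subAy : A :\ y \subset A := subsetDl A [set y].
have [[T TA ->]|[u1 u1A u1v]] := IH _ ltAy v.
  by left; exists T => //; apply: subset_trans subAy.
have [[T TA HT]|[u2 u2A u2v]] := IH _ ltAy (v + g y).
  left; exists (y |: T); first by rewrite subUset sub1set yA (subset_trans TA).
  have yT : y \notin T by apply/negP => /(subsetP TA); rewrite !inE eqxx.
  by rewrite big_setU1 //= -HT addrCA ffun_addvv addr0.
right.
have [u1y|/F2_eq1 u1y] := eqVneq (dot u1 (g y)) 0.
  by exists u1 => // z zA; case: (eqVneq z y) => [->|zy] //; rewrite u1A // !inE zy.
have [u2y|/F2_eq1 u2y] := eqVneq (dot u2 (g y)) 0.
  exists u2; last by rewrite dotDr u2y addr0 in u2v.
  by move=> z zA; case: (eqVneq z y) => [->|zy] //; rewrite u2A // !inE zy.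
have u2v0 : dot u2 v = 0.
  move: u2v; rewrite dotDr u2y => /F2_eq1 /eqP.
  by rewrite -subr_eq0 addrK => /eqP.
exists (u1 + u2); last by rewrite dotDl u2v0 addr0.
move=> z zA; case: (eqVneq z y) => [->|zy].
  by rewrite dotDl u1y u2y (addrr_pchar2 pchar_F2).
by rewrite dotDl u1A ?u2A ?addr0 // !inE zy.
Qed.
End Duality.

Section BlockCodeRepair.
Variables (I N : finType) (M : I -> N -> 'F_2).

Lemma encode_dot u y : encode M u y = dot u (gcol M y).
Proof. by apply: eq_bigr => r _; rewrite ffunE. Qed.

Lemma correctable_sub (S S' : {set N}) :
  S' \subset S -> correctable M S -> correctable M S'.
Proof.
move=> sub cS u v H; apply: cS => i iS; apply: H.
by apply: contra iS; apply: (subsetP sub).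
Qed.

Lemma correctable_span (S : {set N}) x : correctable M S ->
  exists2 T : {set N}, T \subset ~: S & gcol M x = \sum_(y in T) gcol M y.
Proof.
move=> cS; have [//|[u uL]] := span_or_separated (gcol M) (~: S) (gcol M x).
have enc0 y : encode M 0 y = 0 by rewrite /encode big1 // => r _; rewrite ffunE mul0r.
rewrite -encode_dot (cS u 0) ?enc0 ?eqxx // => y yS.
by rewrite enc0 encode_dot uL // inE.
Qed.

Lemma easy_repair_mono (L L' : {set N}) x :
  L \subset L' -> easy_repair M L x -> easy_repair M L' x.
Proof. by move=> sLL' [J [HJ JL rel]]; exists J; split=> //; apply: subset_trans sLL'. Qed.

Lemma easy_repair1 (L : {set N}) x y :
  x \notin L -> y \in L -> gcol M x = gcol M y -> easy_repair M L x.
Proof.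
move=> xL yL Exy; exists [set y]; split; rewrite ?cards1 ?sub1set //.
split; last by rewrite big_set1.
by rewrite inE; apply: contraNneq xL => ->.
Qed.

Lemma easy_repair2 (L : {set N}) x y z :
  x \notin L -> y \in L -> z \in L -> y != z ->
  gcol M x = gcol M y + gcol M z -> easy_repair M L x.
Proof.
move=> xL yL zL yz Exyz; exists [set y; z]; split.
- by rewrite cards2 yz.
- by rewrite subUset !sub1set yL zL.
- split; last by rewrite big_setU1 ?big_set1 // inE.
  by rewrite !inE; apply/norP; split; apply: contraNneq xL => ->.
Qed.

Lemma easy_repair_property_from_step :
  (forall S : {set N}, correctable M S -> S != set0 ->
     exists2 x, x \in S & easy_repair M (~: S) x) ->
  easy_repair_property M.
Proof.
move=> step S; elim: {S}_.+1 {-2}S (ltnSn #|S|) => // n IH S; rewrite ltnS => leSn cS.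
have [->|Sn0] := eqVneq S set0; first by exists [::]; split=> [|[]//]; rewrite enum_set0.
have [x xS repx] := step S cS Sn0.
have ltSx : (#|S :\ x| < n)%N by rewrite (cardsD1 x S) xS in leSn.
have [p [pS repp]] := IH _ ltSx (correctable_sub (subsetDl S [set x]) cS).
exists (x :: p); split.
  apply: uniq_perm; rewrite ?enum_uniq //=.
    by rewrite (perm_uniq pS) enum_uniq (perm_mem pS) mem_enum !inE eqxx.
  by move=> z; rewrite in_cons (perm_mem pS) !mem_enum !inE; case: eqP => // ->.
case=> [|y p1] z p2 /= [<-].
  by move=> _; apply: easy_repair_mono repx; exact: subsetUl.
move=> Ep; apply: easy_repair_mono (repp p1 z p2 Ep).
by apply/subsetP => w; rewrite !inE; case: (w \in S); case: (w == x).
Qed.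
End BlockCodeRepair.

Section SubClosed.
Variables (V : zmodType) (P : V -> Prop).
Hypothesis P_sub : forall u v, P u -> P v -> P (u - v).

Lemma sub_closed0 u : P u -> P 0.
Proof. by move=> Pu; rewrite -(subrr u); apply: P_sub. Qed.

Lemma sub_closedN u : P u -> P (- u).
Proof. by move=> Pu; rewrite -sub0r; apply: P_sub (sub_closed0 Pu) Pu. Qed.

Lemma sub_closedD u v : P u -> P v -> P (u + v).
Proof. by move=> Pu Pv; rewrite -[v]opprK; apply: P_sub Pu (sub_closedN Pv). Qed.
End SubClosed.

Definition delta (V : zmodType) (j : nat) (h : V) (i : nat) : V :=
  if i == j then h else 0.

Lemma deltaD (V : zmodType) j (u v : V) i : delta j (u + v) i = delta j u i + delta j v i.
Proof. by rewrite /delta; case: ifP; rewrite ?addr0. Qed.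

(* A vector on the path 0 -- 1 -- ... -- s has components [r i + t i + t i.+1]:
   a vertex term [r i] in the subgroup [A i], and edge terms [t i], [t i.+1] in
   the subgroups [B i], [B i.+1] of the edges i-1 -- i and i -- i+1 ([t 0] and
   [t s.+1] are zero).  If all components vanish except at one vertex (resp. at
   the two ends of one edge), the triangle rules (any two of [A i h],
   [A i.+1 h], [B i.+1 h] imply the third) push the edge terms in from both
   ends of the path, so the remaining component lies in [A j] (resp. [B j]). *)
Section PathPropagation.
Variables (V : zmodType) (s : nat) (A B : nat -> V -> Prop).
Hypothesis A_sub : forall i, (i <= s)%N -> forall u v, A i u -> A i v -> A i (u - v).
Hypothesis B_sub : forall j, (0 < j <= s)%N -> forall u v, B j u -> B j v -> B j (u - v).
Hypothesis AB_A : forall i h, (i < s)%N -> A i h -> B i.+1 h -> A i.+1 h.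
Hypothesis BA_A : forall i h, (i < s)%N -> B i.+1 h -> A i.+1 h -> A i h.
Hypothesis AA_B : forall i h, (i < s)%N -> A i h -> A i.+1 h -> B i.+1 h.
Variables r t : nat -> V.
Hypothesis A_r : forall i, (i <= s)%N -> A i (r i).
Hypothesis B_t : forall j, (0 < j <= s)%N -> B j (t j).
Hypotheses (t_0 : t 0 = 0) (t_out : t s.+1 = 0).
Local Notation comp i := (r i + t i + t i.+1).

Lemma A_add i u v : (i <= s)%N -> A i u -> A i v -> A i (u + v).
Proof. by move=> lis; exact: (sub_closedD (A_sub lis)). Qed.

Lemma B_add j u v : (0 < j <= s)%N -> B j u -> B j v -> B j (u + v).
Proof. by move=> ljs; exact: (sub_closedD (B_sub ljs)). Qed.

Lemma A_solve i x y z : (i <= s)%N -> x + y + z = 0 -> A i x -> A i y -> A i z.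
Proof.
move=> lis /eqP; rewrite addrC addr_eq0 => /eqP -> Ax Ay.
exact/(sub_closedN (A_sub lis))/(sub_closedD (A_sub lis)).
Qed.

Lemma A_0 i : (i <= s)%N -> A i 0.
Proof. by move=> lis; have := sub_closed0 (A_sub lis) (A_r lis). Qed.

Lemma A_left j : (j <= s)%N -> (forall i, (i < j)%N -> comp i = 0) -> A j (t j).
Proof.
elim: j => [|j IH] ljs comp0; first by rewrite t_0; apply: A_0.
have Atj : A j (t j) by apply: IH (ltnW ljs) _ => i lij; apply/comp0/ltnW.
have Atj1 : A j (t j.+1).
  exact: A_solve (ltnW ljs) (comp0 j (ltnSn j)) (A_r (ltnW ljs)) Atj.
exact: AB_A ljs Atj1 (B_t (j := j.+1) ljs).
Qed.

Lemma A_right j : (j <= s)%N -> (forall i, (j < i <= s)%N -> comp i = 0) -> A j (t j.+1).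
Proof.
move=> ljs comp0; suff: forall d i, (i + d)%N = s -> (j <= i)%N -> A i (t i.+1).
  by move=> /(_ (s - j)%N j (subnKC ljs) (leqnn j)).
elim=> [|d IH] i Eid lji; first by rewrite addn0 in Eid; rewrite Eid t_out; apply: A_0.
have lis : (i < s)%N by lia.
have Ati2 : A i.+1 (t i.+2) by apply: IH; lia.
have Ati1 : A i.+1 (t i.+1).
  have comp_i1 := comp0 i.+1 ltac:(lia); rewrite addrAC in comp_i1.
  exact: A_solve lis comp_i1 (A_r lis) Ati2.
exact: BA_A lis (B_t (j := i.+1) lis) Ati1.
Qed.

Lemma A_of_vertex j h : (j <= s)%N ->
  (forall i, (i <= s)%N -> comp i = delta j h i) -> A j h.
Proof.
move=> ljs Hcomp.
have Atj : A j (t j) by apply: A_left => // i lij; rewrite Hcomp /delta ?ifN_eq //; lia.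
have Atj1 : A j (t j.+1).
  by apply: A_right => // i lji; rewrite Hcomp /delta ?ifN_eq //; lia.
have <- : comp j = h by rewrite Hcomp // /delta eqxx.
exact: A_add ljs (A_add ljs (A_r ljs) Atj) Atj1.
Qed.

Lemma B_of_edge j h : (0 < j <= s)%N ->
  (forall i, (i <= s)%N -> comp i = delta j h i + delta j h i.+1) -> B j h.
Proof.
case: j => [//|i] /= lis Hcomp.
have Ati : A i (t i).
  by apply: A_left => [|l lli]; rewrite 1?ltnW // Hcomp /delta ?ifN_eq ?addr0 //; lia.
have Ati2 : A i.+1 (t i.+2).
  by apply: A_right => // l lil; rewrite Hcomp /delta ?ifN_eq ?addr0 //; lia.
have comp_i : comp i = h by rewrite Hcomp 1?ltnW // /delta eqxx ifN_eq ?add0r //; lia.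
have comp_i1 : comp i.+1 = h by rewrite Hcomp // /delta eqxx ifN_eq ?addr0 //; lia.
have Ahi : A i (h - t i.+1).
  by rewrite -comp_i addrK; apply: A_add (A_r _) Ati; apply: ltnW.
have Ahi1 : A i.+1 (h - t i.+1).
  by rewrite -comp_i1 addrAC addrK; apply: A_add (A_r lis) Ati2.
rewrite -(subrK (t i.+1) h).
exact: (B_add (j := i.+1) lis (AA_B lis Ahi Ahi1) (B_t (j := i.+1) lis)).
Qed.
End PathPropagation.

Section UMSimplex.
Variables (k s : nat) (G : 'M['F_2]_(k, 2 ^ k - 1)).
Local Notation m := (2 ^ k - 1)%N.
Local Notation node := ('I_s.+2 * 'I_(m + m))%type.
Local Notation vec := {ffun 'I_s.+1 * 'I_k -> 'F_2}.
Local Notation M := (@Gtotal k s G).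
Local Notation gc := (gcol M).

Definition blocks (b : nat -> 'cV['F_2]_k) : vec :=
  [ffun p : 'I_s.+1 * 'I_k => b p.1 p.2 0].

(* The column of the node [(j, rshift m b)] (resp. [(j, lshift m b)]) is
   [rcol j (col b G)] (resp. [lcol j (col b G)]): the simplex column sits in
   block row [j] (from [G0]) and, for left-half nodes, also in block row [j - 1]
   (from [G1]).  Block rows beyond [s] are dropped by [blocks]. *)
Definition rcol i (h : 'cV['F_2]_k) : vec := blocks (delta i h).
Definition lcol j (h : 'cV['F_2]_k) : vec :=
  blocks (fun i => delta j h i + delta j h i.+1).

Lemma blocks_eq b b' i : blocks b = blocks b' -> (i <= s)%N -> b i = b' i.
Proof.
move=> E lis; apply/matrixP => a c; rewrite (ord1 c).
by have := congr1 (fun v : vec => v (inord i, a)) E; rewrite !ffunE /= inordK.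
Qed.

Lemma rcol_inj i : (i <= s)%N -> injective (rcol i).
Proof. by move=> lis u v /blocks_eq /(_ lis); rewrite /delta eqxx. Qed.

Lemma gcol_rshift j b : gc (j, rshift m b) = rcol j (col b G).
Proof.
apply/ffunP => -[i a]; rewrite !ffunE /Gtotal /G0 /G1 /delta /= !row_mxEr eq_sym.
by case: eqP => _; rewrite ?mxE //; case: ifP.
Qed.

Lemma gcol_lshift j b : gc (j, lshift m b) = lcol j (col b G).
Proof.
apply/ffunP => -[i a]; rewrite !ffunE /Gtotal /G0 /G1 /delta /= !row_mxEl eq_sym.
case: eqP => [->|_]; first by rewrite ifN_eq ?mxE ?addr0 // gtn_eqF.
by rewrite eq_sym; case: eqP; rewrite !mxE ?add0r.
Qed.

Lemma lcol_first h : lcol 0 h = rcol 0 h.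
Proof. by apply/ffunP => p; rewrite !ffunE /delta /= !mxE addr0. Qed.

Lemma lcol_last h : lcol s.+1 h = rcol s h.
Proof.
apply/ffunP => -[i a]; rewrite !ffunE /delta /= eqSS !mxE.
by rewrite ifN_eq ?mxE ?add0r // neq_ltn ltnS leq_ord.
Qed.

Lemma rcol_last h : rcol s.+1 h = 0.
Proof.
by apply/ffunP => -[i a]; rewrite !ffunE /delta ifN_eq ?mxE // neq_ltn ltnS leq_ord.
Qed.

Lemma rcol0 i : rcol i 0 = 0.
Proof. by apply/ffunP => p; rewrite !ffunE /delta; case: ifP; rewrite mxE. Qed.

Lemma lcol0 j : lcol j 0 = 0.
Proof.
by apply/ffunP => p; rewrite !ffunE /delta; case: ifP; case: ifP; rewrite !mxE addr0.
Qed.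

Lemma rcolD i u v : rcol i (u + v) = rcol i u + rcol i v.
Proof. by apply/ffunP => p; rewrite !ffunE deltaD mxE. Qed.

Lemma lcolD j u v : lcol j (u + v) = lcol j u + lcol j v.
Proof. by apply/ffunP => p; rewrite !ffunE !deltaD !mxE addrACA. Qed.

Lemma lcolE i h : lcol i.+1 h = rcol i h + rcol i.+1 h.
Proof. by apply/ffunP => p; rewrite !ffunE /delta eqSS !mxE addrC. Qed.

Definition shaped (v : vec) : Prop :=
  (exists2 i, (i <= s)%N & exists h, v = rcol i h) \/
  (exists2 j, (0 < j <= s)%N & exists h, v = lcol j h).

Lemma rcol_shaped i h : (i <= s)%N -> shaped (rcol i h).
Proof. by left; exists i => //; exists h. Qed.

Lemma lcol_shaped j h : (0 < j <= s)%N -> shaped (lcol j h).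
Proof. by right; exists j => //; exists h. Qed.

Lemma gcol_shaped y : shaped (gc y).
Proof.
case: y => j c; rewrite -(splitK c); case: (split c) => b /=; set g := col b G.
- rewrite gcol_lshift; have [->|j0] := eqVneq (j : nat) 0%N.
    by rewrite lcol_first; apply: rcol_shaped.
  have [->|js] := eqVneq (j : nat) s.+1; first by rewrite lcol_last; apply: rcol_shaped.
  by apply: lcol_shaped; have := ltn_ord j; lia.
- rewrite gcol_rshift; have [ljs|lsj] := leqP (j : nat) s; first exact: rcol_shaped.
  have -> : (j : nat) = s.+1 by have := ltn_ord j; lia.
  by rewrite rcol_last -(rcol0 0); apply: rcol_shaped.
Qed.

Hypothesis G_nz : forall j, col j G != 0.
Hypothesis G_inj : injective (fun j => col j G).
Hypothesis k_gt0 : (0 < k)%N.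

(* [G] has [2^k - 1] distinct nonzero columns: all nonzero vectors of [F_2^k]. *)
Lemma col_onto h : h != 0 -> exists b, col b G = h.
Proof.
move=> hn0; have cols_full : [set col j G | j : 'I_m] = [set~ 0].
  apply/eqP; rewrite eqEcard card_imset // card_ord cardsC1 card_mx card_Fp // muln1 -subn1.
  by rewrite leqnn andbT; apply/subsetP => _ /imsetP [j _ ->]; rewrite !inE G_nz.
have : h \in [set~ 0] by rewrite !inE hn0.
by rewrite -cols_full => /imsetP [b _ ->]; exists b.
Qed.

Lemma m_gt0 : (0 < m)%N.
Proof. by rewrite subn_gt0 -{1}(expn0 2) ltn_exp2l. Qed.

Lemma shaped_gcol v : shaped v -> exists y, gc y = v.
Proof.
have [b0 _] : exists b : 'I_m, true by exists (Ordinal m_gt0).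
move=> [[i lis [h ->]] | [j ljs [h ->]]]; have [->|/col_onto [b <-]] := eqVneq h 0.
- by exists (ord_max, rshift m b0); rewrite gcol_rshift /= rcol_last rcol0.
- by exists (inord i, rshift m b); rewrite gcol_rshift inordK //; lia.
- by exists (ord_max, rshift m b0); rewrite gcol_rshift /= rcol_last lcol0.
- by exists (inord j, lshift m b); rewrite gcol_lshift inordK //; lia.
Qed.

Section NoRepairStep.
Variable S : {set node}.
Hypothesis no_repair : forall x, x \in S -> ~ easy_repair M (~: S) x.

Definition live_col (v : vec) : Prop := v = 0 \/ exists2 y, y \notin S & gc y = v.

Lemma erased_live_col x : x \in S -> live_col (gc x) -> gc x = 0.
Proof.
move=> xS [//|[y yS Ey]]; case: (no_repair xS).
by apply: (easy_repair1 (y := y)); rewrite ?inE ?negbK.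
Qed.

(* The node whose column is [v1 + v2] cannot be erased: it would be easily
   repaired from two live nodes. *)
Lemma live_colD v1 v2 :
  live_col v1 -> live_col v2 -> shaped (v1 + v2) -> live_col (v1 + v2).
Proof.
move=> [->|[y1 y1S <-]]; first by rewrite add0r.
move=> [->|[y2 y2S <-]] sh; first by rewrite addr0; right; exists y1.
have [->|nz] := eqVneq (gc y1 + gc y2) 0; first by left.
have [z Ez] := shaped_gcol sh.
have [zS|zS] := boolP (z \in S); last by right; exists z.
case: (no_repair zS); apply: (easy_repair2 (y := y1) (z := y2)); rewrite ?inE ?negbK //.
by apply: contraNneq nz => ->; rewrite ffun_addvv.
Qed.

Definition live_rcol i h := live_col (rcol i h).
Definition live_lcol j h := live_col (lcol j h).

Lemma live_rcolD i u v :
  (i <= s)%N -> live_rcol i u -> live_rcol i v -> live_rcol i (u + v).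
Proof.
move=> lis Lu Lv; rewrite /live_rcol rcolD; apply: live_colD Lu Lv _.
by rewrite -rcolD; apply: rcol_shaped.
Qed.

Lemma live_lcolD j u v :
  (0 < j <= s)%N -> live_lcol j u -> live_lcol j v -> live_lcol j (u + v).
Proof.
move=> ljs Lu Lv; rewrite /live_lcol lcolD; apply: live_colD Lu Lv _.
by rewrite -lcolD; apply: lcol_shaped.
Qed.

Lemma live_rcolB i : (i <= s)%N ->
  forall u v, live_rcol i u -> live_rcol i v -> live_rcol i (u - v).
Proof. by move=> lis u v; rewrite oppv_F2; apply: live_rcolD. Qed.

Lemma live_lcolB j : (0 < j <= s)%N ->
  forall u v, live_lcol j u -> live_lcol j v -> live_lcol j (u - v).
Proof. by move=> ljs u v; rewrite oppv_F2; apply: live_lcolD. Qed.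

Lemma live_rcol_step i h :
  (i < s)%N -> live_rcol i h -> live_lcol i.+1 h -> live_rcol i.+1 h.
Proof.
move=> lis Li Lj; have E : rcol i h + lcol i.+1 h = rcol i.+1 h.
  by rewrite lcolE addrA ffun_addvv add0r.
by rewrite /live_rcol -E; apply: live_colD Li Lj _; rewrite E; apply: rcol_shaped.
Qed.

Lemma live_rcol_back i h :
  (i < s)%N -> live_lcol i.+1 h -> live_rcol i.+1 h -> live_rcol i h.
Proof.
move=> lis Lj Li; have E : lcol i.+1 h + rcol i.+1 h = rcol i h.
  by rewrite lcolE -addrA ffun_addvv addr0.
rewrite /live_rcol -E; apply: live_colD Lj Li _.
by rewrite E; apply/rcol_shaped/ltnW.
Qed.

Lemma live_lcol_join i h :
  (i < s)%N -> live_rcol i h -> live_rcol i.+1 h -> live_lcol i.+1 h.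
Proof.
move=> lis Li Li1; rewrite /live_lcol lcolE; apply: live_colD Li Li1 _.
by rewrite -lcolE; apply: lcol_shaped.
Qed.

Definition live_decomposition (v : vec) : Prop :=
  exists r t : nat -> 'cV['F_2]_k,
    [/\ forall i, (i <= s)%N -> live_rcol i (r i),
        forall j, (0 < j <= s)%N -> live_lcol j (t j),
        t 0 = 0, t s.+1 = 0 & v = blocks (fun i => r i + t i + t i.+1)].

Lemma live_decomposition0 : live_decomposition 0.
Proof.
exists (fun=> 0), (fun=> 0); split=> // [i _|j _|].
- by rewrite /live_rcol rcol0; left.
- by rewrite /live_lcol lcol0; left.
- by apply/ffunP => p; rewrite !ffunE !addr0 mxE.
Qed.

Lemma live_decompositionD v y :
  y \notin S -> live_decomposition v -> live_decomposition (gc y + v).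
Proof.
move=> yS [r [t [Lr Lt t0 ts ->]]].
have Ly : live_col (gc y) by right; exists y.
have [[i lis [h Eh]] | [j ljs [h Eh]]] := gcol_shaped y; rewrite Eh in Ly *.
- exists (r \+ delta i h), t; split=> // [l lls|].
    rewrite /= /delta; case: eqP => [->|_]; first exact: live_rcolD (Lr _ lis) Ly.
    by rewrite addr0; apply: Lr.
  by apply/ffunP => p; rewrite !ffunE !mxE /=; ring.
- exists r, (t \+ delta j h); split=> // [l lls|||].
  + rewrite /= /delta; case: eqP => [->|_]; first exact: live_lcolD (Lt _ ljs) Ly.
    by rewrite addr0; apply: Lt.
  + by rewrite /= /delta t0 ifN_eq ?addr0 //; lia.
  + by rewrite /= /delta ts ifN_eq ?addr0 //; lia.
  + by apply/ffunP => p; rewrite !ffunE !mxE /=; ring.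
Qed.

Lemma live_span_decomposition (T : {set node}) :
  T \subset ~: S -> live_decomposition (\sum_(y in T) gc y).
Proof.
move=> TL; apply: big_rec; first exact: live_decomposition0.
by move=> y v yT; apply: live_decompositionD; move/subsetP: TL => /(_ y yT); rewrite inE.
Qed.

Lemma erased_gcol0 x : correctable M S -> x \in S -> gc x = 0.
Proof.
move=> cS xS; apply: erased_live_col xS _.
have [T TL ET] := correctable_span x cS.
have [r [t [Lr Lt t0 ts Ex]]] := live_span_decomposition TL; rewrite -ET in Ex.
have blocks_gcx b i : gc x = blocks b -> (i <= s)%N -> r i + t i + t i.+1 = b i.
  by move=> Eb lis; exact (blocks_eq (etrans (esym Ex) Eb) lis).
have [[j ljs [h Eh]] | [j ljs [h Eh]]] := gcol_shaped x; rewrite Eh.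
- apply: (A_of_vertex live_rcolB live_rcol_step live_rcol_back Lr Lt t0 ts ljs).
  by move=> i; apply: blocks_gcx.
- apply: (B_of_edge live_rcolB live_lcolB live_rcol_step live_rcol_back live_lcol_join
    Lr Lt t0 ts ljs).
  by move=> i; apply: (blocks_gcx (fun l => delta j h l + delta j h l.+1)).
Qed.

Lemma no_repair_false : correctable M S -> S != set0 -> False.
Proof.
move=> cS /set0Pn [x xS].
pose b0 := Ordinal m_gt0.
pose y1 : node := (ord0, lshift m b0); pose y2 : node := (ord0, rshift m b0).
have E12 : gc y1 = gc y2 by rewrite gcol_lshift gcol_rshift lcol_first.
have nz2 : gc y2 != 0.
  by rewrite gcol_rshift -(rcol0 0) (inj_eq (rcol_inj _)) ?G_nz.
have live y : gc y != 0 -> y \in ~: S.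
  by move=> nzy; rewrite inE; apply: contraNN nzy => /(erased_gcol0 cS) ->.
apply: (no_repair xS); apply: (easy_repair2 (y := y1) (z := y2)).
- by rewrite inE negbK.
- by apply: live; rewrite E12.
- exact: live.
- by rewrite xpair_eqE eq_lrshift andbF.
- by rewrite erased_gcol0 // E12 ffun_addvv.
Qed.
End NoRepairStep.

Lemma um_repair_step S : correctable M S -> S != set0 ->
  exists2 x, x \in S & easy_repair M (~: S) x.
Proof.
move=> cS Sn0; apply: NNPP => none; apply: (no_repair_false (S := S)) cS Sn0.
by move=> x xS rep; apply: none; exists x.
Qed.
End UMSimplex.

Theorem theorem5p2 (k : nat) (G : 'M['F_2]_(k, 2 ^ k - 1)) (s : nat) :
  (2 <= k)%N ->
  (forall j, col j G != 0) ->
  injective (fun j => col j G) ->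
  easy_repair_property (@Gtotal k s G).
Proof.
move=> k_gt1 G_nz G_inj; apply: easy_repair_property_from_step => S.
exact: um_repair_step G_nz G_inj (ltnW k_gt1) S.
Qed.
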